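(* There is an absolute constant $C>0$ such that for every $d\ge1$, a standard Gaussian random vector $\mathbf{w}\sim\mathcal{N}(0,I_d)$ satisfies $\mathbb{E}\|\mathbf{w}\|_T\le C\sqrt{d}$.
   Context: For $\mathbf{v}\in\mathbb{R}^d$ define \[\|\mathbf{v}\|_T^2=\sup_{\emptyset\ne S\subseteq[d]}\log^4(2d/|S|)\sum_{j\in S}v_j^2.\] *)

From HB Require Import structures.
From mathcomp Require Import all_boot all_order all_algebra.
From mathcomp Require Import all_classical all_reals all_analysis.
Set Implicit Arguments. Unset Strict Implicit. Unset Printing Implicit Defensive.
Import Order.TTheory GRing.Theory Num.Theory.
Local Open Scope ring_scope.
Local Open Scope ereal_scope.

Definition Tnorm2 {R : realType} (d : nat) (v : 'I_d -> R) : R :=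
  (\big[Num.max/0%R]_(S : {set 'I_d} | S != finset.set0)
     (ln ((2 * d)%:R / #|S|%:R) ^+ 4 * \sum_(j in S) v j ^+ 2))%R.

Definition Tnorm {R : realType} (d : nat) (v : 'I_d -> R) : R :=
  Num.sqrt (Tnorm2 v).

Definition upd {R : realType} (v : nat -> R) (n : nat) (x : R) : nat -> R :=
  fun k => if k == n then x else v k.

(* gauss_exp n f = E[f(w)] where w_0..w_{n-1} i.i.d. N(0,1) (other coordinates 0),
   written as an iterated Lebesgue integral against the standard normal density
   (for nonnegative f, equal to the expectation w.r.t. N(0,I_n) by Tonelli). *)
Fixpoint gauss_exp {R : realType} (n : nat) (f : (nat -> R) -> \bar R) : \bar R :=
  match n with
  | 0%N => f (fun _ => 0%R)
  | n'.+1 => \int[@lebesgue_measure R]_(x in [set: R])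
               ((normal_pdf 0 1 x)%:E * gauss_exp n' (fun v => f (upd v n' x)))
  end.

Definition expected_Tnorm {R : realType} (d : nat) : \bar R :=
  gauss_exp d (fun v => (Tnorm (fun j : 'I_d => v (nat_of_ord j)))%:E).

From HB Require Import structures.
From mathcomp Require Import all_boot all_order all_algebra.
From mathcomp Require Import all_classical all_reals all_analysis.
From mathcomp Require Import ring lra measurable_realfun.
Import Order.TTheory GRing.Theory Num.Theory.
Local Open Scope ring_scope.
Local Open Scope ereal_scope.

(* Since ln y ^ 8 <= 8! y for y >= 1, a subset S of size
   k with x = 2d/k gives, by AM-GM on each term,
     ln(x)^4 * sum_{j in S} w_j^2 <= k 8! x / 2 + (sum_j w_j^4) / 2
                                  = 8! d + (sum_j w_j^4) / 2,
   hence ||w||_T^2 <= 8! d + (sum_j w_j^4)/2.  Using sqrt t <= (t/s + s)/2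
   with s = sqrt d, ||w||_T is bounded by the affine function
     (8!+1)/2 sqrt d + (sum_j w_j^4) / (4 sqrt d)
   of the fourth powers of the coordinates.

   The density comparison x^4 phi_1(x) <= M4 phi_2(x)
   between the N(0,1) and N(0,4) densities bounds the fourth moment of a
   standard Gaussian by M4; integrating one coordinate at a time, the
   iterated Gaussian expectation of any nonnegative function bounded by
   a + b sum_{j<n} v_j^4 is at most a + M4 b n.  Combining both parts with
   a = (8!+1)/2 sqrt d and b = 1/(4 sqrt d) gives C = (8!+1)/2 + M4/4. *)

(* Monotonicity of the integral over the whole space for nonnegative
   integrands; unlike ge0_le_integral it needs no measurability, which
   matters because the inner iterated integrals are not known measurable. *)
Lemma ge0_le_integralT d (T : measurableType d) (R : realType)
    (mu : {measure set T -> \bar R}) (f1 f2 : T -> \bar R) :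
  (forall x, 0 <= f1 x) -> (forall x, f1 x <= f2 x) ->
  \int[mu]_(x in [set: T]) f1 x <= \int[mu]_(x in [set: T]) f2 x.
Proof.
move=> f10 f12.
have f20 x : 0 <= f2 x by exact: le_trans (f10 x) (f12 x).
rewrite !ge0_integralTE //.
apply: ereal_sup_le => _ [h /= hf <-]; exists h => //= x.
exact: le_trans (hf x) (f12 x).
Qed.

Section deterministic_bound.
Local Open Scope ring_scope.
Context {R : realType}.

(* Logarithms grow slower than any power: ln y ^ (n+1) <= (n+1)! y for y >= 1;
   this is the Taylor bound y = exp(ln y) >= (ln y)^(n+1) / (n+1)!. *)
Lemma ln_pow_le (n : nat) {y : R} : 1 <= y -> ln y ^+ n.+1 <= n.+1`!%:R * y.
Proof.
move=> y_ge1; have y_gt0 : 0 < y by exact: lt_le_trans y_ge1.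
have := expR_ge1Dxn n (ln_ge0 y_ge1); rewrite lnK ?posrE //.
have fact_gt0R : (0 : R) < n.+1`!%:R by rewrite ltr0n fact_gt0.
move=> taylor; rewrite -ler_pdivrMl //; apply: le_trans taylor.
by rewrite mulrC lerDr.
Qed.

Lemma Tnorm2_le {d : nat} (w : 'I_d -> R) :
  Tnorm2 w <= 8`!%:R * d%:R + (\sum_j w j ^+ 4) / 2.
Proof.
have w4_ge0 j : 0 <= w j ^+ 4 by exact: exprn_even_ge0.
rewrite /Tnorm2; apply: bigmax_le => [|S SN].
  by rewrite addr_ge0 // divr_ge0 // sumr_ge0.
have k_gt0 : (0 < #|S|)%N by rewrite card_gt0.
have k_le : (#|S| <= d)%N by rewrite -[X in (_ <= X)%N]card_ord max_card.
set k := #|S| in k_gt0 k_le *.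
have kR : (0 : R) < k%:R by rewrite ltr0n.
set x := (2 * d)%:R / k%:R.
have x_ge1 : 1 <= x.
  by rewrite ler_pdivlMr // mul1r ler_nat (leq_trans k_le) // leq_pmull.
have kx : k%:R * x = 2 * d%:R by rewrite /x natrM mulrCA divff ?gt_eqF ?mulr1.
have lnx := ln_pow_le 7 x_ge1; set L := ln x in lnx *.
(* AM-GM on each term of the sum over S *)
have amgm j : L ^+ 4 * w j ^+ 2 <= 8`!%:R * x / 2 + w j ^+ 4 / 2.
  have w4 : w j ^+ 4 = (w j ^+ 2) ^+ 2 by rewrite -exprM.
  have L8 : L ^+ 8 = (L ^+ 4) ^+ 2 by rewrite -exprM.
  have := sqr_ge0 (L ^+ 4 - w j ^+ 2).
  rewrite w4; rewrite L8 in lnx; nra.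
rewrite mulr_sumr; apply: (le_trans (ler_sum _ (fun j _ => amgm j))).
rewrite big_split /= sumr_const -/k -!big_distrl /= lerD //.
  (* k copies of 8! x / 2 add up to 8! d because k x = 2d *)
  rewrite -[_ *+ k]mulr_natr (_ : _ * _ / 2 * _ = 8`!%:R / 2 * (k%:R * x)).
    by rewrite kx; lra.
  by ring.
rewrite ler_wpM2r ?invr_ge0 // [leRHS](bigID (mem S)) /= lerDl.
by rewrite sumr_ge0.
Qed.

Lemma Tnorm2_ge0 {d : nat} (w : 'I_d -> R) : 0 <= Tnorm2 w.
Proof. exact: bigmax_ge_id. Qed.

Lemma sqrt_le_mean {t s : R} : 0 <= t -> 0 < s -> Num.sqrt t <= (t / s + s) / 2.
Proof.
move=> t_ge0 s_gt0; set r := Num.sqrt t.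
have -> : t = r ^+ 2 by rewrite sqr_sqrtr.
rewrite ler_pdivlMr // -(ler_pM2r s_gt0) mulrDl divfK ?gt_eqF //.
by have := sqr_ge0 (r - s); nra.
Qed.

Lemma Tnorm_le_quartic {d : nat} (w : 'I_d -> R) : (1 <= d)%N ->
  Tnorm w <= (8`!%:R + 1) / 2 * Num.sqrt d%:R
             + 1 / (4 * Num.sqrt d%:R) * \sum_j w j ^+ 4.
Proof.
move=> d_ge1; set s := Num.sqrt d%:R.
have s_gt0 : 0 < s by rewrite sqrtr_gt0 ltr0n.
have ds : d%:R = s ^+ 2 by rewrite sqr_sqrtr ?ler0n.
rewrite /Tnorm; apply: (le_trans (sqrt_le_mean (Tnorm2_ge0 w) s_gt0)).
rewrite [leRHS](_ : _ = ((8`!%:R * s ^+ 2 + (\sum_j w j ^+ 4) / 2) / s + s) / 2).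
  by rewrite -ds ler_pM2r // lerD2r ler_pM2r ?invr_gt0 // Tnorm2_le.
by field; rewrite gt_eqF.
Qed.

End deterministic_bound.

Section normal_moment.
Local Open Scope ring_scope.
Context {R : realType}.

(* A bound on the fourth moment of the standard Gaussian. *)
Definition M4 : R := 128 / 9 * normal_peak 1 / normal_peak 2.

Lemma M4_ge0 : 0 <= M4.
Proof. by rewrite /M4 !mulr_ge0 ?invr_ge0 ?normal_peak_ge0. Qed.

(* x^4 phi_1(x) <= M4 phi_2(x): since x^4 <= 128/9 exp(3x^2/8) by the Taylor
   bound for exp, x^4 times the N(0,1) density is dominated by a multiple of
   the N(0,4) density. *)
Lemma normal_pdf_pow4_le (x : R) :
  normal_pdf 0 1 x * x ^+ 4 <= M4 * normal_pdf 0 2 x.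
Proof.
rewrite !normal_pdfE ?oner_eq0 ?pnatr_eq0 // /normal_fun subr0 /M4.
set y := 3 / 8 * x ^+ 2.
have y_ge0 : 0 <= y by rewrite mulr_ge0 // sqr_ge0.
have x4 : x ^+ 4 <= 128 / 9 * expR y.
  have taylor : 1 + y ^+ 2 / 2 <= expR y := expR_ge1Dxn 1 y_ge0.
  have -> : x ^+ 4 = 64 / 9 * y ^+ 2 by rewrite /y; field.
  lra.
have e : expR (- x ^+ 2 / (1 ^+ 2 *+ 2)) * expR y = expR (- x ^+ 2 / (2 ^+ 2 *+ 2)).
  by rewrite -expRD; congr expR; rewrite /y; field.
have peak1_gt0 : 0 < normal_peak (1 : R) by rewrite normal_peak_gt0 ?oner_eq0.
have peak2_gt0 : 0 < normal_peak (2 : R) by rewrite normal_peak_gt0 ?pnatr_eq0.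
rewrite -e; set E := expR (- x ^+ 2 / _).
have E_ge0 : 0 <= E by exact: expR_ge0.
rewrite (_ : _ / _ * (_ * _) = normal_peak 1 * E * (128 / 9 * expR y)); last first.
  by field; rewrite gt_eqF.
by rewrite ler_wpM2l // mulr_ge0 // ltW.
Qed.
End normal_moment.

Section gaussian_expectation.
Context {R : realType}.

Lemma normal_fourth_moment_le :
  \int[@lebesgue_measure R]_(x in [set: R]) (normal_pdf 0 1 x * x ^+ 4)%:E
    <= M4%:E.
Proof.
apply: (@le_trans _ _
  (\int[@lebesgue_measure R]_(x in [set: R]) (M4 * normal_pdf 0 2 x)%:E)).
  apply: ge0_le_integralT => x; rewrite lee_fin ?normal_pdf_pow4_le //.
  by apply: mulr_ge0; [exact: normal_pdf_ge0 | exact: exprn_even_ge0].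
under eq_integral do rewrite EFinM.
rewrite ge0_integralZl_EFin ?M4_ge0 ?integral_normal_pdf ?mule1 //.
- by move=> x _; rewrite lee_fin normal_pdf_ge0.
- by apply/measurable_EFinP; exact: measurable_normal_pdf.
Qed.

Lemma normal_quartic_le {a b : R} : (0 <= a)%R -> (0 <= b)%R ->
  \int[@lebesgue_measure R]_(x in [set: R]) (normal_pdf 0 1 x * (a + b * x ^+ 4))%:E
    <= (a + M4 * b)%:E.
Proof.
move=> a_ge0 b_ge0.
have pdf_ge0 (x : R) : (0 <= normal_pdf 0 1 x)%R by exact: normal_pdf_ge0.
have pdf4_ge0 (x : R) : (0 <= normal_pdf 0 1 x * x ^+ 4)%R.
  by apply: mulr_ge0; [exact: pdf_ge0 | exact: exprn_even_ge0].
have mpdf : measurable_fun [set: R] (fun x => (normal_pdf 0 1 x)%:E).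
  by apply/measurable_EFinP; exact: measurable_normal_pdf.
have mpdf4 : measurable_fun [set: R] (fun x => (normal_pdf 0 1 x * x ^+ 4)%:E).
  apply/measurable_EFinP; apply: measurable_funM; first exact: measurable_normal_pdf.
  exact: measurable_funX.
have integrand_split (x : R) : (normal_pdf 0 1 x * (a + b * x ^+ 4))%:E =
    a%:E * (normal_pdf 0 1 x)%:E + b%:E * (normal_pdf 0 1 x * x ^+ 4)%:E.
  by rewrite -!EFinM -EFinD; congr EFin; ring.
under eq_integral do rewrite integrand_split.
rewrite ge0_integralD //; last 4 first.
- by move=> x _; rewrite mule_ge0 ?lee_fin.
- exact: emeasurable_funM.
- by move=> x _; rewrite mule_ge0 ?lee_fin.
- exact: emeasurable_funM.
rewrite !ge0_integralZl_EFin //; last 2 first.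
- by move=> x _; rewrite lee_fin.
- by move=> x _; rewrite lee_fin.
rewrite integral_normal_pdf mule1 EFinD leeD2l // mulrC EFinM.
by rewrite lee_wpmul2l ?lee_fin // normal_fourth_moment_le.
Qed.

Lemma gauss_exp_ge0 (n : nat) (f : (nat -> R) -> \bar R) :
  (forall v, 0 <= f v) -> 0 <= gauss_exp n f.
Proof.
elim: n f => [|n IH] f f_ge0 /=; first exact: f_ge0.
apply: integral_ge0 => x _.
by rewrite mule_ge0 ?lee_fin ?normal_pdf_ge0 ?IH.
Qed.

(* Iterated Gaussian expectation of a function bounded by an affine function
   of the fourth powers of the first n coordinates; the induction integrates
   out the last coordinate, which moves one quartic term into the constant. *)
Lemma gauss_exp_quartic_le {n : nat} {a b : R} {f : (nat -> R) -> \bar R} :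
  (0 <= a)%R -> (0 <= b)%R -> (forall v, 0 <= f v) ->
  (forall v, f v <= (a + b * \sum_(j < n) v j ^+ 4)%:E) ->
  gauss_exp n f <= (a + M4 * b * n%:R)%:E.
Proof.
elim: n f a => [|n IH] f a a_ge0 b_ge0 f_ge0 f_le /=.
  by have := f_le (fun _ => 0%R); rewrite big_ord0 !mulr0 !addr0.
have x4_ge0 (x : R) : (0 <= x ^+ 4)%R by exact: exprn_even_ge0.
have inner x : gauss_exp n (fun v => f (upd v n x))
    <= ((a + b * x ^+ 4) + M4 * b * n%:R)%:E.
  apply: IH => // [|v].
    by rewrite addr_ge0 // mulr_ge0.
  apply: (le_trans (f_le _)); rewrite lee_fin big_ord_recr /= /upd eqxx.
  under eq_bigr => i _ do rewrite ifF ?(ltn_eqF (ltn_ord i)) //.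
  lra.
apply: (@le_trans _ _ (\int[@lebesgue_measure R]_(x in [set: R])
  (normal_pdf 0 1 x * ((a + M4 * b * n%:R) + b * x ^+ 4))%:E)).
  apply: ge0_le_integralT => x.
    by rewrite mule_ge0 ?lee_fin ?normal_pdf_ge0 ?gauss_exp_ge0.
  rewrite EFinM lee_wpmul2l ?lee_fin ?normal_pdf_ge0 //.
  by apply: (le_trans (inner x)); rewrite lee_fin; lra.
have c_ge0 : (0 <= a + M4 * b * n%:R)%R.
  by rewrite addr_ge0 // (mulr_ge0 (mulr_ge0 M4_ge0 b_ge0)).
apply: (le_trans (normal_quartic_le c_ge0 b_ge0)).
by rewrite lee_fin -natr1; lra.
Qed.
End gaussian_expectation.

Theorem lemma4p3 (R : realType) :
  exists C : R, (0 < C)%R /\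
    forall d : nat, (1 <= d)%N ->
      expected_Tnorm d <= (C * Num.sqrt (d%:R))%:E.
Proof.
have m4_ge0 : (0 <= M4 :> R)%R := M4_ge0.
have K_gt0 : ((0 : R) < 8`!%:R)%R by rewrite ltr0n fact_gt0.
exists ((8`!%:R + 1) / 2 + M4 / 4)%R; split; first lra.
move=> d d_ge1; set s := Num.sqrt (d%:R : R).
have s_gt0 : (0 < s)%R by rewrite sqrtr_gt0 ltr0n.
have a_ge0 : (0 <= (8`!%:R + 1) / 2 * s)%R by rewrite mulr_ge0 ?ltW //; lra.
have b_ge0 : (0 <= 1 / (4 * s))%R by rewrite divr_ge0 // mulr_ge0 // ltW.
have Tnorm_ge0 (v : nat -> R) : 0 <= (Tnorm (fun j : 'I_d => v j))%:E.
  by rewrite lee_fin sqrtr_ge0.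
have Tnorm_le (v : nat -> R) : (Tnorm (fun j : 'I_d => v j))%:E
    <= ((8`!%:R + 1) / 2 * s + 1 / (4 * s) * \sum_(j < d) v j ^+ 4)%:E.
  by rewrite lee_fin Tnorm_le_quartic.
apply: (le_trans (gauss_exp_quartic_le a_ge0 b_ge0 Tnorm_ge0 Tnorm_le)).
rewrite lee_fin [leLHS](_ : _ = ((8`!%:R + 1) / 2 + M4 / 4) * s)%R //.
have ds : (d%:R : R) = (s ^+ 2)%R by rewrite sqr_sqrtr ?ler0n.
by rewrite ds; field; rewrite gt_eqF.
Qed.
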